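(* Let $\eta=\frac{1+\sqrt5}{2}$ and $N=\mathbf{Z}[\eta]=\mathbf{Z}e_1\oplus\mathbf{Z}e_2$ with $e_1=1$, $e_2=\eta$. Let $b$ be the symmetric bilinear form on $N$ whose Gram matrix with respect to $(e_1,e_2)$ is $\begin{pmatrix}4&2\\2&-4\end{pmatrix}$. Then: \begin{enumerate} \item $(N,b)$ is an even hyperbolic lattice, and there is no $x\in N$ with $b(x,x)\in\{0,2,-2\}$. \item Multiplication by $\eta^6$ is an isometry of $(N,b)$. Its characteristic polynomial is $t^2-18t+1$, and it acts on the discriminant group $N^*/N$ as $-\mathrm{id}_{N^*/N}$. \end{enumerate}
   Context: $(N,b)$ is an even hyperbolic lattice if $b(x,x)$ is even for all $x\in N$ and $b$ has signature $(1,1)$. Via $b$ one has $N\subset N^*=\mathrm{Hom}_{\mathbf{Z}}(N,\mathbf{Z})\subset N\otimes\mathbf{Q}$, and the discriminant group is $N^*/N$. An isometry of $(N,b)$ is a $\mathbf{Z}$-module automorphism preserving $b$, and it induces an automorphism of $N^*/N$. Multiplication by $\eta^6$ is the map $p(\eta)\mapsto\eta^6p(\eta)$ on $N$. *)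

From mathcomp Require Import all_boot all_order all_algebra.
Set Implicit Arguments. Unset Strict Implicit. Unset Printing Implicit Defensive.
Import Order.TTheory GRing.Theory Num.Theory.
Local Open Scope ring_scope.

(* N (x) Q = Q(eta), eta = (1+sqrt 5)/2, written in the basis e1 = 1, e2 = eta:
   the pair (a, c) stands for a + c*eta.  Multiplication uses eta^2 = eta + 1. *)
Definition Qeta := (rat * rat)%type.

Definition qadd (x y : Qeta) : Qeta := (x.1 + y.1, x.2 + y.2).
Definition qmul (x y : Qeta) : Qeta :=
  (x.1 * y.1 + x.2 * y.2, x.1 * y.2 + x.2 * y.1 + x.2 * y.2).
Definition qone : Qeta := (1, 0).
Definition eta : Qeta := (0, 1).
Definition qpow (x : Qeta) (n : nat) : Qeta := iter n (qmul x) qone.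

Definition inN (x : Qeta) : Prop := (x.1 \is a Num.int) /\ (x.2 \is a Num.int).

Definition b (x y : Qeta) : rat :=
  4 * x.1 * y.1 + 2 * x.1 * y.2 + 2 * x.2 * y.1 - 4 * x.2 * y.2.

Definition inDual (y : Qeta) : Prop := forall x, inN x -> b y x \is a Num.int.

Definition integral_form : Prop := forall x y, inN x -> inN y -> b x y \is a Num.int.
Definition even_form : Prop := forall x, inN x -> exists k : int, b x x = 2 * k%:~R.

Definition signature_1_1 : Prop :=
  exists x y : Qeta, b x y = 0 /\ 0 < b x x /\ b y y < 0.

Definition even_hyperbolic_lattice : Prop :=
  integral_form /\ even_form /\ signature_1_1.

Definition isometry_N (f : Qeta -> Qeta) : Prop :=
  [/\ forall x, inN x -> inN (f x),
      forall y, inN y -> exists x, inN x /\ f x = y,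
      forall x y, inN x -> inN y -> f x = f y -> x = y,
      forall x y, inN x -> inN y -> f (qadd x y) = qadd (f x) (f y)
    & forall x y, inN x -> inN y -> b (f x) (f y) = b x y].

Definition e_ (j : 'I_2) : Qeta := if j == 0 then (1, 0) else (0, 1).
Definition mat_of (f : Qeta -> Qeta) : 'M[rat]_2 :=
  \matrix_(i < 2, j < 2) (if i == 0 then (f (e_ j)).1 else (f (e_ j)).2).

Definition acts_as_minus_id_on_disc (f : Qeta -> Qeta) : Prop :=
  forall y, inDual y -> inN (qadd (f y) y).

Definition mul_eta6 (x : Qeta) : Qeta := qmul (qpow eta 6) x.

From mathcomp Require Import all_boot all_order all_algebra ring lra zify.
Import Order.TTheory GRing.Theory Num.Theory.
Local Open Scope ring_scope.

(* Writing x' for the Galois conjugate, b(x, y) = 2 Tr(x y'), so b(x, x) = 4 N(x)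
   with N(a + c eta) = a^2 + ac - c^2.  The norm form is anisotropic over Q
   because sqrt 5 is irrational, hence b(x, x) lies in 4Z \ {0} for x <> 0.
   The unit eta^6 = 5 + 8 eta has norm 1, so multiplication by it preserves b;
   its trace is 18.  Finally N^* = (2 sqrt 5)^-1 N, and
   eta^6 + 1 = 6 + 8 eta = 2 sqrt 5 eta^3, so eta^6 acts as -1 on N^*/N. *)

Lemma char_poly_mx2 (R : comNzRingType) (A : 'M[R]_2) :
  char_poly A
  = 'X^2 - (A 0 0 + A 1 1)%:P * 'X + (A 0 0 * A 1 1 - A 0 1 * A 1 0)%:P.
Proof.
rewrite /char_poly /char_poly_mx (expand_det_row _ 0) !big_ord_recl big_ord0.
rewrite /cofactor !det_mx11 !mxE /= /bump /=.
have -> : lift 0 0 = 1 :> 'I_2 by apply/val_inj.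
have -> : lift 1 0 = 0 :> 'I_2 by apply/val_inj.
rewrite !(polyCD, polyCB, polyCM, polyCN); ring.
Qed.

Lemma sqr_neq_prime_mul_sqr (p m n : nat) :
  prime p -> (0 < n)%N -> (m * m != p * (n * n))%N.
Proof.
move=> p_pr n_gt0; apply/eqP => def_m2.
have p_gt0 := prime_gt0 p_pr.
have m_gt0 : (0 < m)%N.
  rewrite lt0n; apply/eqP => m0; move/esym/eqP: def_m2.
  by rewrite m0 !muln_eq0 !gtn_eqF.
move/(congr1 (logn p)): def_m2.
rewrite !lognM ?muln_gt0 ?m_gt0 ?n_gt0 // (logn_prime p p_pr) eqxx; lia.
Qed.

Lemma golden_norm_eq0 (a c : int) : a * a + a * c - c * c = 0 -> a = 0 /\ c = 0.
Proof.
move=> norm0.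
have sq5 : (`|(2 * a + c)%R| * `|(2 * a + c)%R| = 5 * (`|c| * `|c|))%N.
  by rewrite -!abszM -[5%N]/`|5%:Z|%N -abszM; congr absz; nia.
have c0 : c = 0.
  apply/eqP; rewrite -absz_eq0 -leqn0 leqNgt; apply/negP => c_gt0.
  by move/eqP: sq5; apply/negP; apply: sqr_neq_prime_mul_sqr.
by move: norm0; rewrite c0; nia.
Qed.

Lemma inNP x : inN x -> exists a c : int, x = (a%:~R, c%:~R).
Proof.
by case=> /intrP[a ha] /intrP[c hc]; exists a, c; rewrite -ha -hc -surjective_pairing.
Qed.

Lemma b_intE (a c d e : int) :
  b (a%:~R, c%:~R) (d%:~R, e%:~R) = (4 * a * d + 2 * a * e + 2 * c * d - 4 * c * e)%:~R.
Proof. by rewrite /b /=; ring. Qed.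

Lemma b_diag_intE (a c : int) :
  b (a%:~R, c%:~R) (a%:~R, c%:~R) = (4 * (a * a + a * c - c * c))%:~R.
Proof. by rewrite b_intE; congr intmul; ring. Qed.

Lemma integral_form_N : integral_form.
Proof. by move=> x y /inNP[a [c ->]] /inNP[d [e ->]]; rewrite b_intE rpred_int. Qed.

Lemma even_form_N : even_form.
Proof.
move=> x /inNP[a [c ->]]; exists (2 * (a * a + a * c - c * c)).
by rewrite b_diag_intE !intrM; ring.
Qed.

Lemma signature_1_1_N : signature_1_1.
Proof. by exists (1, 0), (1, -2); rewrite /b /=; split; [ring | split; lra]. Qed.

Lemma even_hyperbolic_N : even_hyperbolic_lattice.
Proof. by split; [exact: integral_form_N | split; [exact: even_form_N | exact: signature_1_1_N]]. Qed.

Lemma b_diag_notin_N x : inN x -> x <> (0, 0) -> b x x \notin [:: 0; 2; -2].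
Proof.
move=> /inNP[a [c ->]] x_neq0; rewrite b_diag_intE.
have norm_neq0 : a * a + a * c - c * c != 0.
  by apply/eqP => /golden_norm_eq0[a0 c0]; apply: x_neq0; rewrite a0 c0.
rewrite !inE -[0 : rat]/(0%:~R) -[2 : rat]/(2%:~R) -[-2 : rat]/((-2)%:~R) !eqr_int.
by move: norm_neq0 => /eqP; lia.
Qed.

Lemma mul_eta6E x : mul_eta6 x = (5 * x.1 + 8 * x.2, 8 * x.1 + 13 * x.2).
Proof. by rewrite /mul_eta6 /qpow /qmul /eta /qone /=; congr (_, _); ring. Qed.

Definition mul_eta6_inv (x : Qeta) : Qeta :=
  (13 * x.1 - 8 * x.2, - 8 * x.1 + 5 * x.2).

Lemma mul_eta6K : cancel mul_eta6 mul_eta6_inv.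
Proof. by move=> [x1 x2]; rewrite mul_eta6E /mul_eta6_inv /=; congr (_, _); ring. Qed.

Lemma mul_eta6_invK : cancel mul_eta6_inv mul_eta6.
Proof. by move=> [x1 x2]; rewrite mul_eta6E /mul_eta6_inv /=; congr (_, _); ring. Qed.

Lemma mul_eta6_inN x : inN x -> inN (mul_eta6 x).
Proof. by case=> x1_int x2_int; rewrite mul_eta6E; split; rewrite /= !rpredD ?rpredM. Qed.

Lemma mul_eta6_inv_inN x : inN x -> inN (mul_eta6_inv x).
Proof.
by case=> x1_int x2_int; split; rewrite /= ?rpredB ?rpredD ?rpredM ?rpredN.
Qed.

Lemma mul_eta6_add x y : mul_eta6 (qadd x y) = qadd (mul_eta6 x) (mul_eta6 y).
Proof. by rewrite !mul_eta6E /qadd /=; congr (_, _); ring. Qed.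

Lemma b_mul_eta6 x y : b (mul_eta6 x) (mul_eta6 y) = b x y.
Proof. by rewrite !mul_eta6E /b /=; ring. Qed.

Lemma isometry_mul_eta6 : isometry_N mul_eta6.
Proof.
split=> [x|y y_inN|x y _ _|x y _ _|x y _ _].
- exact: mul_eta6_inN.
- by exists (mul_eta6_inv y); rewrite mul_eta6_invK; split=> //; apply: mul_eta6_inv_inN.
- by move/(congr1 mul_eta6_inv); rewrite !mul_eta6K.
- exact: mul_eta6_add.
- exact: b_mul_eta6.
Qed.

Lemma char_poly_mul_eta6 : char_poly (mat_of mul_eta6) = 'X^2 - 18%:P * 'X + 1.
Proof.
rewrite char_poly_mx2 !mxE !mul_eta6E /e_ /=.
rewrite -polyC1; congr (_ - _%:P * _ + _%:P); ring.
Qed.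

Lemma inDual_coords y : inDual y -> b y (1, 0) \is a Num.int /\ b y (0, 1) \is a Num.int.
Proof. by move=> y_dual; split; apply: y_dual; split; rewrite ?rpred0 ?rpred1. Qed.

Lemma mul_eta6_disc : acts_as_minus_id_on_disc mul_eta6.
Proof.
move=> [y1 y2] /inDual_coords[]; rewrite mul_eta6E /qadd /b /=.
set u := (X in X \is a Num.int) => u_int.
set v := (X in X \is a Num.int) => v_int.
have -> : 5 * y1 + 8 * y2 + y1 = 2 * u - v by rewrite /u /v; ring.
have -> : 8 * y1 + 13 * y2 + y2 = 3 * u - 2 * v by rewrite /u /v; ring.
by split; rewrite rpredB ?rpredM.
Qed.

Theorem corollary3p4 :
  (even_hyperbolic_lattice /\
   (forall x, inN x -> x <> (0, 0) -> b x x \notin [:: 0; 2; -2]))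
  /\
  [/\ isometry_N mul_eta6,
      char_poly (mat_of mul_eta6) = 'X^2 - 18%:P * 'X + 1
    & acts_as_minus_id_on_disc mul_eta6].
Proof.
split; first by split; [exact: even_hyperbolic_N | exact: b_diag_notin_N].
split; [exact: isometry_mul_eta6 | exact: char_poly_mul_eta6 | exact: mul_eta6_disc].
Qed.
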